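(* Let $n=ab$ where $a\ge b\ge 2$ are integers. Fix an integer $\beta\ge 2$, and for a positive integer $d$ define $\vartheta_d:\{0,1,\ldots,n-1\}\to\mathbb{Z}_{\ge 0}$ by $\vartheta_d(x)=\beta\lfloor x/d\rfloor d+(x\bmod d)$. Let $X$ be the $n\times n$ matrix with entries $X_{j,k}=\frac{1}{\sqrt n}\zeta_{\beta n}^{\vartheta_a(j)\vartheta_b(k)}$ for $j,k\in\{0,\ldots,n-1\}$, where $\zeta_m=e^{2\pi\mathtt{i}/m}$. Then $X$ is type-II. Moreover, if $G$ is the graph with adjacency matrix $A=X\,\mathrm{diag}(\vartheta_b(0),\ldots,\vartheta_b(n-1))\,X^{-1}$ (i.e. eigenvalues $\{\vartheta_b(k)\}$ with $A$ unitarily diagonalized by $X$), then $G$ has universal perfect state transfer.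
   Context: A type-II matrix is a unitary matrix all of whose entries have the same modulus. $x\bmod d$ denotes the remainder in $\{0,\ldots,d-1\}$. A graph with Hermitian adjacency matrix $A$ has universal perfect state transfer if for every pair of vertices $v,w$ there is $t>0$ with $|\langle w|e^{-\mathtt{i} At}|v\rangle|=1$. *)

From mathcomp Require Import all_boot all_order all_algebra.
From mathcomp Require Import all_classical all_reals all_analysis.
From mathcomp Require Export complex.
Set Implicit Arguments. Unset Strict Implicit. Unset Printing Implicit Defensive.
Import Order.TTheory GRing.Theory Num.Theory.
Import numFieldNormedType.Exports.
Local Open Scope ring_scope.
Local Open Scope complex_scope.
Local Open Scope classical_set_scope.

Definition expi (R : realType) (theta : R) : R[i] := (cos theta +i* sin theta)%C.

(* zeta_m ^ e = e^{2 pi i e / m} *)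
Definition zeta_pow (R : realType) (m e : nat) : R[i] :=
  expi (2 * pi * e%:R / m%:R).

Definition vartheta (beta d x : nat) : nat := (beta * (x %/ d) * d + x %% d)%N.

Definition Xmat (R : realType) (a b beta : nat) : 'M[R[i]]_(a * b) :=
  \matrix_(j, k) ((Num.sqrt ((a * b)%:R : R))^-1%:C *
                  zeta_pow R (beta * (a * b)) (vartheta beta a j * vartheta beta b k)).

Definition adjmx (R : realType) (n : nat) (M : 'M[R[i]]_n) : 'M[R[i]]_n :=
  (map_mx (fun z => z^*) M)^T.

Definition unitary (R : realType) (n : nat) (M : 'M[R[i]]_n) : Prop :=
  M *m adjmx M = 1%:M /\ adjmx M *m M = 1%:M.

Definition typeII (R : realType) (n : nat) (M : 'M[R[i]]_n) : Prop :=
  unitary M /\ forall j k j' k', `|M j k| = `|M j' k'|.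

Definition cvgC (R : realType) (u : nat -> R[i]) (z : R[i]) : Prop :=
  ((fun N => complex.Re (u N)) @ \oo --> complex.Re z) /\
  ((fun N => complex.Im (u N)) @ \oo --> complex.Im z).

Definition is_mexp (R : realType) (n : nat) (M U : 'M[R[i]]_n) : Prop :=
  forall j k, cvgC (fun N => (\sum_(m < N) (m`!%:R)^-1 *: M ^+ m) j k) (U j k).

Definition universal_pst (R : realType) (n : nat) (A : 'M[R[i]]_n) : Prop :=
  forall v w : 'I_n, exists t : R, 0 < t /\
    exists U : 'M[R[i]]_n, is_mexp ((- 'i * t%:C) *: A) U /\ `|U w v| = 1.

(* Write n = a b and N = beta n.  Splitting k < n as k = p b + s gives
   vartheta_b(k) = beta p b + s, and splitting j = q a + r gives
   vartheta_a(j) = beta q a + r.  Up to an integer, the phase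
   (vartheta_a(j) - vartheta_a(j')) vartheta_b(k) / N is then
   p (r - r') / a + s (vartheta_a(j) - vartheta_a(j')) / N, so every inner
   product of two rows of X is a product of two sums of roots of unity, and
   X X^* = I.  Since A = X D X^* with D = diag(vartheta_b), the propagator is
   e^{-iAt} = X e^{-iDt} X^*; at t = 2 pi (1 + (vartheta_a(w) - vartheta_a(v)) / N),
   which is positive because vartheta_a(v) < N, every summand of its (w, v)
   entry equals 1/n, so that entry is exactly 1. *)

From mathcomp Require Import all_boot all_order all_algebra.
From mathcomp Require Import all_classical all_reals all_analysis.
From mathcomp Require Import complex.
From mathcomp Require Import ring lra zify.
Set Implicit Arguments. Unset Strict Implicit. Unset Printing Implicit Defensive.
Import Order.TTheory GRing.Theory Num.Theory.
Import numFieldNormedType.Exports.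
Local Open Scope ring_scope.
Local Open Scope complex_scope.

Section ConjugateDiagonal.
Variables (C : comPzRingType) (n : nat) (P Q : 'M[C]_n).
Hypotheses (QP : Q *m P = 1%:M) (PQ : P *m Q = 1%:M).

Lemma exp_conjmx (M : 'M[C]_n) m : (P *m M *m Q) ^+ m = P *m M ^+ m *m Q.
Proof.
elim: m => [|m IH]; first by rewrite !expr0 mulmx1 PQ.
rewrite exprS IH -mulmxE !mulmxA -(mulmxA _ Q P) QP mulmx1 -!(mulmxA P).
by rewrite mulmxE -exprS.
Qed.

Lemma exp_diag_mx (d : 'rV[C]_n) m :
  diag_mx d ^+ m = diag_mx (\row_l d 0 l ^+ m).
Proof.
elim: m => [|m IH].
  by rewrite expr0; apply/matrixP => i j; rewrite !mxE expr0.
by rewrite exprS IH -mulmxE mulmx_diag; congr diag_mx; apply/rowP => l; rewrite !mxE exprS.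
Qed.

Lemma scale_conj_diag_mx (c : C) (d : 'rV[C]_n) :
  c *: (P *m diag_mx d *m Q) = P *m diag_mx (c *: d) *m Q.
Proof. by rewrite linearZ /= scalemxAl scalemxAr. Qed.

Lemma conj_diag_mxE (d : 'rV[C]_n) j k :
  (P *m diag_mx d *m Q) j k = \sum_l P j l * Q l k * d 0 l.
Proof. by rewrite mul_mx_diag mxE; apply: eq_bigr => l _; rewrite mxE mulrAC. Qed.

End ConjugateDiagonal.

Section ComplexLimits.
Variable R : realType.

Lemma cvgC_add (u v : nat -> R[i]) (y z : R[i]) :
  cvgC u y -> cvgC v z -> cvgC (fun N => u N + v N) (y + z).
Proof.
move=> [uRe uIm] [vRe vIm]; split; rewrite raddfD.
- by under eq_fun do rewrite raddfD; exact: cvgD.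
- by under eq_fun do rewrite raddfD; exact: cvgD.
Qed.

Lemma cvgC_mull (c : R[i]) (u : nat -> R[i]) (z : R[i]) :
  cvgC u z -> cvgC (fun N => c * u N) (c * z).
Proof.
case: c z => c1 c2 [z1 z2] [/= uRe uIm]; split => /=.
- have -> : (fun N => complex.Re ((c1 +i* c2) * u N)) =
            (fun N => c1 * complex.Re (u N) - c2 * complex.Im (u N)).
    by apply/funext => N; case: (u N).
  by apply: cvgB; exact: cvgMl_tmp.
- have -> : (fun N => complex.Im ((c1 +i* c2) * u N)) =
            (fun N => c1 * complex.Im (u N) + c2 * complex.Re (u N)).
    by apply/funext => N; case: (u N).
  by apply: cvgD; exact: cvgMl_tmp.
Qed.

Lemma cvgC_lincomb (I : Type) (r : seq I) (c : I -> R[i])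
    (u : I -> nat -> R[i]) (z : I -> R[i]) :
  (forall l, cvgC (u l) (z l)) ->
  cvgC (fun N => \sum_(l <- r) c l * u l N) (\sum_(l <- r) c l * z l).
Proof.
move=> uz; elim: r => [|l r IH].
  by under eq_fun do rewrite big_nil; rewrite big_nil; split; exact: cvg_cst.
under eq_fun do rewrite big_cons; rewrite big_cons.
exact/cvgC_add/IH/cvgC_mull.
Qed.

End ComplexLimits.

Definition is_cexp (R : realType) (z w : R[i]) : Prop :=
  cvgC (fun N => \sum_(m < N) (m`!%:R)^-1 * z ^+ m) w.

Lemma is_mexp_conj_diag (R : realType) n (P Q : 'M[R[i]]_n) (d f : 'rV[R[i]]_n) :
  Q *m P = 1%:M -> P *m Q = 1%:M -> (forall l, is_cexp (d 0 l) (f 0 l)) ->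
  is_mexp (P *m diag_mx d *m Q) (P *m diag_mx f *m Q).
Proof.
move=> QP PQ df j k; rewrite conj_diag_mxE.
have -> : (fun N => (\sum_(m < N) (m`!%:R)^-1 *: (P *m diag_mx d *m Q) ^+ m) j k) =
          (fun N => \sum_l P j l * Q l k * \sum_(m < N) (m`!%:R)^-1 * d 0 l ^+ m).
  apply/funext => N; rewrite summxE.
  under eq_bigr do rewrite mxE exp_conjmx // exp_diag_mx conj_diag_mxE mulr_sumr.
  rewrite exchange_big /=; apply: eq_bigr => l _; rewrite mulr_sumr.
  by apply: eq_bigr => m _; rewrite mxE; ring.
exact: cvgC_lincomb.
Qed.

Section ImaginaryExponential.
Variable R : realType.

Lemma exp_coeff_Ni (t : R) m :
  (m`!%:R)^-1 * (- 'i * t%:C) ^+ m = (cos_coeff t m)%:C - 'i * (sin_coeff t m)%:C.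
Proof.
have Ni_even k : (- 'i) ^+ k.*2 = (-1) ^+ k :> R[i].
  by rewrite -muln2 mulnC exprM sqrrN sqr_i.
rewrite exprMn /cos_coeff /sin_coeff /=.
have [m_odd|m_even] := boolP (odd m).
- have -> : m = (m./2).*2.+1 by rewrite -[LHS]odd_double_half m_odd.
  rewrite /= -!exprnP doubleK uphalf_double exprSr Ni_even.
  rewrite !rmorphM /= !rmorphXn /= !fmorphV /= !rmorphN /= !rmorph_nat /= rmorph1.
  ring.
- have -> : m = (m./2).*2 by rewrite -[LHS]odd_double_half (negbTE m_even).
  rewrite -!exprnP doubleK Ni_even.
  rewrite !rmorphM /= !rmorphXn /= !fmorphV /= !rmorphN /= !rmorph_nat /= rmorph1.
  ring.
Qed.

Lemma is_cexp_Ni (t : R) : is_cexp (- 'i * t%:C) (expi (- t)).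
Proof.
rewrite /is_cexp /expi cosN sinN.
under eq_fun do under eq_bigr do rewrite exp_coeff_Ni.
split.
- have -> : (fun N => complex.Re (\sum_(m < N)
               ((cos_coeff t m)%:C - 'i * (sin_coeff t m)%:C))) = series (cos_coeff t).
    apply/funext => N; rewrite raddf_sum /series /= big_mkord.
    by apply: eq_bigr => m _ /=; ring.
  by rewrite cos.unlock; exact: is_cvg_series_cos_coeff.
- have -> : (fun N => complex.Im (\sum_(m < N)
               ((cos_coeff t m)%:C - 'i * (sin_coeff t m)%:C))) =
            (fun N => - series (sin_coeff t) N).
    apply/funext => N; rewrite raddf_sum /series /= big_mkord -sumrN.
    by apply: eq_bigr => m _ /=; ring.
  by rewrite sin.unlock; apply: cvgN; exact: is_cvg_series_sin_coeff.
Qed.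

End ImaginaryExponential.

Section UnitCircle.
Variable R : realType.

Lemma expiD (x y : R) : expi (x + y) = expi x * expi y.
Proof.
rewrite /expi cosD sinD; apply/eqP; rewrite eq_complex /=.
by apply/andP; split; apply/eqP; ring.
Qed.

Lemma norm_expi (x : R) : `|expi x| = 1.
Proof. by rewrite normc_def /= cos2Dsin2 sqrtr1. Qed.

Definition e2pi (x : R) : R[i] := expi (2 * pi * x).

Lemma e2piD x y : e2pi (x + y) = e2pi x * e2pi y.
Proof. by rewrite /e2pi mulrDr expiD. Qed.

Lemma e2pi0 : e2pi 0 = 1.
Proof. by rewrite /e2pi mulr0 /expi cos0 sin0. Qed.

Lemma e2pi_nat n : e2pi n%:R = 1.
Proof.
elim: n => [|n IH]; first exact: e2pi0.
have two_pi : 2 * pi = pi *+ 2 :> R by rewrite mulr2n; ring.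
by rewrite -addn1 natrD e2piD IH mul1r /e2pi mulr1 /expi two_pi cos2pi sin2pi.
Qed.

Lemma e2pi_natB m n : e2pi (m%:R - n%:R) = 1.
Proof.
have := e2piD (m%:R - n%:R) n%:R.
by rewrite subrK !e2pi_nat mulr1 => ->.
Qed.

Lemma e2piX x p : e2pi x ^+ p = e2pi (p%:R * x).
Proof.
elim: p => [|p IH]; first by rewrite expr0 mul0r e2pi0.
by rewrite exprS IH -e2piD -addn1 natrD; congr e2pi; ring.
Qed.

Lemma conj_e2pi x : (e2pi x)^* = e2pi (- x).
Proof. by rewrite /e2pi /expi mulrN cosN sinN. Qed.

Lemma norm_e2pi x : `|e2pi x| = 1.
Proof. exact: norm_expi. Qed.

Lemma e2pi_neq1 y : -1 < y < 1 -> y != 0 -> e2pi y != 1.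
Proof.
wlog y_gt0 : y / 0 < y => [wlog_y|/andP[_ y_lt1] _].
  move=> /andP[y_gtN1 y_lt1] y_neq0; have [|y_lt0] := ltP 0 y.
    by move=> y_gt0; apply: wlog_y => //; rewrite y_gtN1.
  have <- : e2pi (y + 1) = e2pi y by rewrite e2piD -[1]/(1%:R) e2pi_nat mulr1.
  rewrite le_eqVlt (negbTE y_neq0) /= in y_lt0.
  by apply: wlog_y; [lra | apply/andP; split; lra | rewrite gt_eqF //; lra].
apply/eqP => /(congr1 (@complex.Re R)); rewrite /e2pi /expi /=.
have -> : 2 * pi * y = pi * y + pi * y by ring.
rewrite cosD; have := cos2Dsin2 (pi * y); rewrite !expr2.
suff : 0 < sin (pi * y) by move=> *; nra.
apply: sin_gt0_pi; rewrite mulr_gt0 ?pi_gt0 //=.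
by rewrite -[ltRHS]mulr1 ltr_pM2l // pi_gt0.
Qed.

Lemma sum_e2pi_diff (a r r' : nat) : (r < a)%N -> (r' < a)%N ->
  \sum_(p < a) e2pi (p%:R * (r%:R - r'%:R) / a%:R) = if r == r' then a%:R else 0.
Proof.
move=> r_lt_a r'_lt_a; have a_gt0 : (0 : R) < a%:R by rewrite ltr0n; lia.
have [<-|r_neq_r'] := eqVneq r r'.
  under eq_bigr do rewrite subrr mulr0 mul0r e2pi0.
  by rewrite sumr_const card_ord.
set z := e2pi ((r%:R - r'%:R) / a%:R).
have -> : \sum_(p < a) e2pi (p%:R * (r%:R - r'%:R) / a%:R) = \sum_(p < a) z ^+ p.
  by apply: eq_bigr => p _; rewrite /z e2piX mulrA.
have z_root : z ^+ a = 1 by rewrite /z e2piX mulrC divfK ?gt_eqF // e2pi_natB.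
have z_neq1 : z != 1.
  have rR : (r%:R : R) < a%:R by rewrite ltr_nat.
  have r'R : (r'%:R : R) < a%:R by rewrite ltr_nat.
  have := ler0n R r; have := ler0n R r' => r'_ge0 r_ge0.
  apply: e2pi_neq1.
    by rewrite ltr_pdivlMr // ltr_pdivrMr //; apply/andP; split; lra.
  by rewrite mulf_neq0 ?invr_eq0 ?(gt_eqF a_gt0) // subr_eq0 eqr_nat.
have := subrX1 z a; rewrite z_root subrr => /esym/eqP.
by rewrite mulf_eq0 subr_eq0 (negbTE z_neq1) => /eqP.
Qed.

End UnitCircle.

Lemma big_ord_mul (T : Type) (idx : T) (op : Monoid.law idx) (a b : nat)
    (F : nat -> T) :
  \big[op/idx]_(k < a * b) F k =
  \big[op/idx]_(p < a) \big[op/idx]_(s < b) F (p * b + s)%N.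
Proof.
rewrite -(big_mkord xpredT F); elim: a => [|a IH].
  by rewrite mul0n big_ord0 big_geq.
rewrite big_ord_recr /= mulSnr (@big_cat_nat _ _ _ (a * b)) ?leq_addr //= IH.
congr (op _ _); rewrite -{1}[(a * b)%N]add0n big_addn addKn big_mkord.
by apply: eq_bigr => s _; rewrite addnC.
Qed.

Lemma vartheta_mulD (beta d p s : nat) : (s < d)%N ->
  vartheta beta d (p * d + s) = (beta * p * d + s)%N.
Proof.
move=> s_lt_d; rewrite /vartheta divnMDl ?(divn_small s_lt_d) ?addn0; last by lia.
by rewrite modnMDl modn_small.
Qed.

Lemma vartheta_lt (beta a b x : nat) : (0 < beta)%N -> (x < a * b)%N ->
  (vartheta beta a x < beta * (a * b))%N.
Proof.
move=> beta_gt0 x_lt; have a_gt0 : (0 < a)%N by case: a x_lt => //; rewrite mul0n.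
have q_lt : (x %/ a < b)%N by rewrite ltn_divLR // mulnC.
have r_lt : (x %% a < a)%N by rewrite ltn_pmod.
rewrite /vartheta; move: q_lt r_lt.
set q := (x %/ a)%N; set r := (x %% a)%N => q_lt r_lt.
have := leq_mul (leqnn (beta * a)) q_lt; nia.
Qed.

Section VarthetaCharacters.
Variables (R : realType) (a b beta : nat).
Hypotheses (a_gt0 : (0 < a)%N) (b_gt0 : (0 < b)%N) (beta_gt0 : (0 < beta)%N).

Let N : R := (beta * (a * b))%:R.

Lemma e2pi_vartheta_split x y p s : (s < b)%N ->
  e2pi (((vartheta beta a x)%:R - (vartheta beta a y)%:R) *
        (vartheta beta b (p * b + s))%:R / N) =
  e2pi (p%:R * ((x %% a)%N%:R - (y %% a)%N%:R) / a%:R) *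
  e2pi (s%:R * ((vartheta beta a x)%:R - (vartheta beta a y)%:R) / N).
Proof.
move=> s_lt_b; rewrite vartheta_mulD // -e2piD.
rewrite -[RHS]mul1r -(e2pi_natB R (beta * p * (x %/ a))%N (beta * p * (y %/ a))%N) -e2piD.
congr e2pi; rewrite /N /vartheta !natrD !natrM; field.
by rewrite !pnatr_eq0 -!lt0n a_gt0 b_gt0 beta_gt0.
Qed.

Lemma vartheta_diff_same_mod x y : (x %% a = y %% a)%N ->
  ((vartheta beta a x)%:R - (vartheta beta a y)%:R) / N =
  ((x %/ a)%N%:R - (y %/ a)%N%:R) / b%:R.
Proof.
move=> r_eq; rewrite /N /vartheta r_eq !natrD !natrM; field.
by rewrite !pnatr_eq0 -!lt0n a_gt0 b_gt0 beta_gt0.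
Qed.

Lemma sum_e2pi_vartheta (x y : 'I_(a * b)) :
  \sum_(k < a * b) e2pi (((vartheta beta a x)%:R - (vartheta beta a y)%:R) *
                         (vartheta beta b k)%:R / N) =
  if x == y then (a * b)%:R else 0.
Proof.
have divn_lt (z : 'I_(a * b)) : (z %/ a < b)%N by rewrite ltn_divLR // (mulnC b).
rewrite (big_ord_mul _ _ _ (fun k =>
  e2pi (((vartheta beta a x)%:R - (vartheta beta a y)%:R) * (vartheta beta b k)%:R / N))).
transitivity ((\sum_(p < a) e2pi (p%:R * ((x %% a)%N%:R - (y %% a)%N%:R) / a%:R)) *
  \sum_(s < b) e2pi (s%:R * ((vartheta beta a x)%:R - (vartheta beta a y)%:R) / N)).
  rewrite big_distrlr /=; apply: eq_bigr => p _; apply: eq_bigr => s _.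
  exact: e2pi_vartheta_split.
rewrite sum_e2pi_diff ?ltn_pmod //.
have [r_eq|r_neq] := eqVneq (x %% a)%N (y %% a)%N; last first.
  by rewrite mul0r; case: eqVneq => // xy; rewrite xy eqxx in r_neq.
under eq_bigr do rewrite -mulrA vartheta_diff_same_mod // mulrA.
rewrite sum_e2pi_diff //; have [q_eq|q_neq] := eqVneq (x %/ a)%N (y %/ a)%N.
  have -> : x = y by apply/val_inj; rewrite /= (divn_eq x a) (divn_eq y a) q_eq r_eq.
  by rewrite eqxx natrM.
by rewrite mulr0; case: eqVneq => // xy; rewrite xy eqxx in q_neq.
Qed.

End VarthetaCharacters.

Section TypeIIMatrix.
Variables (R : realType) (a b beta : nat).
Hypotheses (a_gt0 : (0 < a)%N) (b_gt0 : (0 < b)%N) (beta_gt0 : (0 < beta)%N).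

Let X := Xmat R a b beta.
Let c : R[i] := (Num.sqrt ((a * b)%:R : R))^-1%:C.
Let N : R := (beta * (a * b))%:R.

Lemma Xmat_e2pi j k :
  X j k = c * e2pi ((vartheta beta a j)%:R * (vartheta beta b k)%:R / N).
Proof. by rewrite mxE /zeta_pow /e2pi; congr (_ * expi _); rewrite /N !natrM; ring. Qed.

Lemma adjmx_Xmat_e2pi k j :
  adjmx X k j = c * e2pi (- ((vartheta beta a j)%:R * (vartheta beta b k)%:R / N)).
Proof.
have := Xmat_e2pi j k; rewrite /adjmx !mxE => ->; rewrite rmorphM.
by congr (_ * _); [exact: conjc_real | exact: conj_e2pi].
Qed.

Lemma Xmat_scale_sqr : c * c * (a * b)%:R = 1.
Proof.
have n_gt0 : (0 : R) < (a * b)%:R by rewrite ltr0n muln_gt0 a_gt0.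
have -> : ((a * b)%:R : R[i]) = ((a * b)%:R : R)%:C by rewrite rmorph_nat.
by rewrite /c -!rmorphM /= -invfM -expr2 sqr_sqrtr ?ltW // mulVf ?gt_eqF.
Qed.

Lemma Xmat_adjmx : X *m adjmx X = 1%:M.
Proof.
apply/matrixP => w v; rewrite !mxE.
under eq_bigr do rewrite Xmat_e2pi adjmx_Xmat_e2pi mulrACA -e2piD -!mulrBl.
rewrite -mulr_sumr sum_e2pi_vartheta //.
by case: eqVneq => _; rewrite ?Xmat_scale_sqr ?mulr0.
Qed.

Lemma typeII_Xmat : typeII X.
Proof.
split; first by split; [exact: Xmat_adjmx | exact/mulmx1C/Xmat_adjmx].
by move=> j k j' k'; rewrite !Xmat_e2pi !normrM !norm_e2pi.
Qed.

Lemma invmx_Xmat : invmx X = adjmx X.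
Proof.
have [X_unit _] := mulmx1_unit Xmat_adjmx.
by rewrite -[LHS]mulmx1 -Xmat_adjmx mulmxA mulVmx // mul1mx.
Qed.

Lemma Xmat_phase_entry (v w : 'I_(a * b)) :
  let t := 2 * pi * (1 + ((vartheta beta a w)%:R - (vartheta beta a v)%:R) / N) in
  (X *m diag_mx (\row_l expi (- (t * (vartheta beta b l)%:R))) *m adjmx X) w v = 1.
Proof.
move=> t; have -> : 1 = \sum_(l < a * b) c * c.
  by rewrite sumr_const card_ord -mulr_natr Xmat_scale_sqr.
rewrite conj_diag_mxE; apply: eq_bigr => l _.
rewrite Xmat_e2pi adjmx_Xmat_e2pi mxE mulrACA -e2piD.
have -> : expi (- (t * (vartheta beta b l)%:R)) =
          e2pi (- ((1 + ((vartheta beta a w)%:R - (vartheta beta a v)%:R) / N) *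
                   (vartheta beta b l)%:R)).
  by rewrite /e2pi /t; congr expi; ring.
rewrite -[c * c * _ * _]mulrA -e2piD.
rewrite [X in e2pi X](_ : _ = 0%:R - (vartheta beta b l)%:R).
  by rewrite e2pi_natB mulr1.
rewrite /N; field.
by rewrite !pnatr_eq0 -!lt0n a_gt0 b_gt0 beta_gt0.
Qed.

Lemma universal_pst_Xmat :
  universal_pst (X *m diag_mx (\row_k ((vartheta beta b k)%:R : R[i])) *m invmx X).
Proof.
move=> v w; have N_gt0 : 0 < N by rewrite ltr0n !muln_gt0 a_gt0 b_gt0 beta_gt0.
set t := 2 * pi * (1 + ((vartheta beta a w)%:R - (vartheta beta a v)%:R) / N).
have t_gt0 : 0 < t.
  have v_lt1 : (vartheta beta a v)%:R / N < 1.
    by rewrite ltr_pdivrMr // mul1r ltr_nat vartheta_lt.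
  have w_ge0 : 0 <= (vartheta beta a w)%:R / N by rewrite divr_ge0 ?ler0n ?ltW.
  by rewrite mulr_gt0 ?mulr_gt0 ?pi_gt0 // mulrBl; lra.
exists t; split => //.
exists (X *m diag_mx (\row_l expi (- (t * (vartheta beta b l)%:R))) *m adjmx X).
split; last by rewrite Xmat_phase_entry normr1.
rewrite invmx_Xmat scale_conj_diag_mx.
apply: is_mexp_conj_diag; [exact/mulmx1C/Xmat_adjmx | exact: Xmat_adjmx |].
move=> l; rewrite !mxE.
have -> : - 'i * t%:C * (vartheta beta b l)%:R = - 'i * (t * (vartheta beta b l)%:R)%:C.
  by rewrite [in RHS]rmorphM [in RHS]rmorph_nat mulrA.
exact: is_cexp_Ni.
Qed.

End TypeIIMatrix.

Theorem theorem7 (R : realType) (a b beta : nat)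
  (hb : (2 <= b)%N) (hab : (b <= a)%N) (hbeta : (2 <= beta)%N) :
  let X := Xmat R a b beta in
  let A := X *m diag_mx (\row_k ((vartheta beta b k)%:R : R[i])) *m invmx X in
  typeII X /\ universal_pst A.
Proof.
have b_gt0 : (0 < b)%N by lia.
have a_gt0 : (0 < a)%N by lia.
have beta_gt0 : (0 < beta)%N by lia.
by split; [exact: typeII_Xmat | exact: universal_pst_Xmat].
Qed.
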